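(* Let $\langle X,\tau\rangle$ be a topological space that is a continuous open image of the Sorgenfrey line, and let $F\subseteq X$ be a nonempty closed subset such that the subspace $\langle F,\tau\upharpoonright F\rangle$ has no isolated points. Then $\langle F,\tau\upharpoonright F\rangle$ is a continuous open image of the Sorgenfrey line.
   Context: The Sorgenfrey line is $\mathbb R$ with topology generated by $\{[a,b)\}$; ''continuous open image'' means image under a continuous open surjection. *)

From HB Require Import structures.
From mathcomp Require Import all_boot all_order all_algebra.
From mathcomp Require Import all_classical all_reals all_analysis.
Set Implicit Arguments. Unset Strict Implicit. Unset Printing Implicit Defensive.
Import Order.TTheory GRing.Theory Num.Theory.
Local Open Scope classical_set_scope.
Local Open Scope ring_scope.

(* The Sorgenfrey line: the carrier of a real field R with the topology
   generated by the base of half-open intervals [a, b). *)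
Definition sorgenfrey (R : realType) : Type := R.

Section Sorgenfrey.
Variable R : realType.
HB.instance Definition _ := Choice.on (sorgenfrey R).

Definition hoitv (a c : R) : set (sorgenfrey R) := [set x : R | a <= x < c].

Definition sorgenfrey_open : set_system (sorgenfrey R) :=
  [set U | forall x, U x -> exists a c, hoitv a c x /\ hoitv a c `<=` U].

Let sopT : sorgenfrey_open setT.
Proof.
move=> x _; exists x, (x + 1); split => //.
by rewrite /hoitv /= lexx ltrDl ltr01.
Qed.

Let sopI : setI_closed sorgenfrey_open.
Proof.
move=> U V hU hV x [/hU [a1 [c1 [hx1 s1]]] /hV [a2 [c2 [hx2 s2]]]].
move: hx1 hx2; rewrite /hoitv /= => /andP[ha1 hb1] /andP[ha2 hb2].
exists (Order.max a1 a2), (Order.min c1 c2); split.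
  by rewrite /= ge_max lt_min ha1 ha2 hb1 hb2.
move=> s /=; rewrite ge_max lt_min => /andP[/andP[h1 h2] /andP[h3 h4]].
by split; [apply: s1 | apply: s2]; rewrite /hoitv /= ?h1 ?h2 ?h3 ?h4.
Qed.

Let sop_bigU (J : Type) (f : J -> set (sorgenfrey R)) :
  (forall i, sorgenfrey_open (f i)) -> sorgenfrey_open (\bigcup_i f i).
Proof.
move=> hf x [i _ /hf [a [c [hx s]]]]; exists a, c; split => // y /s fy.
by exists i.
Qed.

HB.instance Definition _ := isOpenTopological.Build (sorgenfrey R) sopT sopI sop_bigU.
End Sorgenfrey.

Definition continuous_open_image_sorgenfrey (R : realType) (Y : topologicalType) : Prop :=
  exists f : sorgenfrey R -> Y,
    [/\ continuous f,
        (forall U : set (sorgenfrey R), open U -> open (f @` U)) &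
        (forall y : Y, exists x : sorgenfrey R, f x = y)].

From HB Require Import structures.
From mathcomp Require Import all_boot all_order all_algebra.
From mathcomp Require Import all_classical all_reals all_analysis.
From mathcomp Require Import ring lra.
Import Order.TTheory GRing.Theory Num.Theory.
Local Open Scope classical_set_scope.
Local Open Scope ring_scope.
Set Implicit Arguments. Unset Strict Implicit. Unset Printing Implicit Defensive.

(* Let f be a continuous open surjection from the Sorgenfrey line S onto X,
   and C := f^-1(F).  In terms of the order of the reals, C is
   - right-closed: y is in C as soon as C meets every [y, y + e), because F
     is closed and f continuous;
   - right-perfect: every c in C has points of C in every (c, c + e),
     because f maps [c, c + e) onto an open set and F has no isolated point.
   The heart of the file builds, for any nonempty right-closed right-perfect
   C, a map g : R -> R onto C that is right-continuous and maps every
   [x, x + d) onto a Sorgenfrey neighbourhood of g x relative to C.  On each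
   unit interval, g is the limit map of a binary tree whose nodes pair a
   dyadic parameter interval with a window of the line starting at a point
   of C; a node is split by halving the parameter interval and cutting the
   window at the first point of C past the middle of its C-part, so that
   along every branch both the parameter length and the width of the
   C-part of the window at least halve.  Finally x |-> f (g x), corestricted
   to F, is a continuous open surjection onto the subspace F. *)

Lemma halving_lt (R : archiFieldType) (x : nat -> R) :
  (forall n, 0 <= x n) -> (forall n, x n.+1 <= x n / 2) ->
  forall e, 0 < e -> exists n, x n < e.
Proof.
move=> x_ge0 x_half e e_gt0.
have x_pow n : x n * 2 ^+ n <= x 0%N.
  elim: n => [|n IHn]; first by rewrite expr0 mulr1.
  rewrite exprS mulrA (mulrC (x n.+1)); apply: le_trans IHn.
  by apply: ler_wpM2r; [rewrite exprn_ge0 | have := x_half n; lra].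
pose N := (Num.truncn (x 0%N / e)).+1.
have pow_gt : x 0%N < e * 2 ^+ N.
  have N_gt : x 0%N / e < N%:R by apply: truncnS_gt.
  have N_le : N%:R <= 2 ^+ N :> R by rewrite -natrX ler_nat ltnW // ltn_expl.
  rewrite ltr_pdivrMr // in N_gt; apply: (lt_le_trans N_gt).
  by rewrite mulrC ler_pM2l.
exists N; rewrite -(ltr_pM2r (exprn_gt0 N (ltr0n R 2))).
exact: le_lt_trans (x_pow N) pow_gt.
Qed.

Lemma floor_unit (R : archiRealFieldType) (k : int) (y : R) :
  k%:~R <= y < k%:~R + 1 -> Num.floor y = k.
Proof. by move=> ky; apply: floor_def; rewrite intrD. Qed.

Lemma frac_in (R : archiRealFieldType) (x : R) : 0 <= x - (Num.floor x)%:~R < 1.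
Proof.
rewrite subr_ge0 floor_le /=; have := floorD1_gt x.
by rewrite intrD; lra.
Qed.

(* Order-theoretic shadows, on the real line, of "closed" and "without
   isolated points" for subsets of the Sorgenfrey line. *)
Definition right_closed (R : realType) (C : set R) : Prop :=
  forall y, (forall e, 0 < e -> exists c, C c /\ y <= c < y + e) -> C y.

Definition right_perfect (R : realType) (C : set R) : Prop :=
  forall c, C c -> forall e, 0 < e -> exists c', C c' /\ c < c' < c + e.

Definition sorgenfrey_continuous (R : realType) (g : R -> R) : Prop :=
  forall x e, 0 < e -> exists2 d, 0 < d &
    forall y, x <= y < x + d -> g x <= g y < g x + e.

Definition sorgenfrey_open_onto (R : realType) (C : set R) (g : R -> R) : Prop :=
  forall x d, 0 < d -> exists2 eta, 0 < eta &
    forall c, C c -> g x <= c < g x + eta -> exists y, x <= y < x + d /\ g y = c.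

Section SplittingTree.
Variables (R : realType) (C : set R).
Hypotheses (C_rclosed : right_closed C) (C_rperfect : right_perfect C).

Definition window (l u : R) : set R := [set c | C c /\ l <= c < u].
Definition width (l u : R) : R := sup (window l u) - l.
Definition cut_point (l u : R) : R := inf [set c | C c /\ l + width l u / 2 <= c].
Definition proper_window (l u : R) : Prop := C l /\ l < u.

Lemma right_closed_inf (A : set R) :
  A `<=` C -> A !=set0 -> has_lbound A -> C (inf A).
Proof.
move=> AC A0 A_lb; apply: C_rclosed => e e_gt0.
have [a Aa a_lt] := inf_adherent e_gt0 (conj A0 A_lb).
by exists a; split; [apply: AC | rewrite a_lt andbT; apply: ge_inf].
Qed.

Lemma window_has_sup l u : proper_window l u -> has_sup (window l u).
Proof.
move=> [Cl lu]; split; first by exists l; split => //; rewrite lexx lu.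
by exists u => c [_ /andP[_ /ltW]].
Qed.

Lemma window_le l u c : proper_window l u -> window l u c -> c <= l + width l u.
Proof.
by move=> lu wc; rewrite /width addrC subrK; apply: ub_le_sup (window_has_sup lu).2 _ wc.
Qed.

Lemma width_gt0 l u : proper_window l u -> 0 < width l u.
Proof.
move=> lu; have [Cl l_lt_u] := lu.
have ul_gt0 : 0 < u - l by lra.
have [c [Cc /andP[lc cu]]] := C_rperfect Cl ul_gt0.
have : window l u c by split => //; rewrite (ltW lc) /=; lra.
by move/(window_le lu); lra.
Qed.

Lemma cut_spec l u : proper_window l u ->
  [/\ C (cut_point l u), l < cut_point l u, cut_point l u < u &
      l + width l u / 2 <= cut_point l u].
Proof.
move=> lu; have [Cl l_lt_u] := lu; have w_gt0 := width_gt0 lu.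
pose A := [set c | C c /\ l + width l u / 2 <= c].
have [c wc sup_lt] := sup_adherent (divr_gt0 w_gt0 (ltr0n R 2)) (window_has_sup lu).
have Ac : A c by split; [case: wc | rewrite /width in sup_lt *; lra].
have A_lb : has_lbound A by exists (l + width l u / 2) => x [].
have cut_ge : l + width l u / 2 <= cut_point l u by apply: lb_le_inf => [|x []]; [exists c|].
have cut_le : cut_point l u <= c by apply: ge_inf.
have [_ /andP[_ cu]] := wc.
split => //; [|lra|lra].
by apply: right_closed_inf => //; [move=> x [] | exists c].
Qed.

Lemma proper_cutl l u : proper_window l u -> proper_window l (cut_point l u).
Proof. by move=> lu; have [Cl _] := lu; have [_ ? _ _] := cut_spec lu. Qed.

Lemma proper_cutr l u : proper_window l u -> proper_window (cut_point l u) u.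
Proof. by move=> lu; have [? _ ? _] := cut_spec lu. Qed.

Lemma width_cutl l u : proper_window l u -> width l (cut_point l u) <= width l u / 2.
Proof.
move=> lu; have [_ l_lt_cut _ cut_ge] := cut_spec lu; have [Cl _] := lu.
rewrite {1}/width; suff : sup (window l (cut_point l u)) <= l + width l u / 2 by lra.
apply: ge_sup => [|x [Cx /andP[lx x_lt_cut]]]; first by exists l; split; rewrite ?lexx.
rewrite leNgt; apply/negP => x_gt.
have : cut_point l u <= x.
  by apply: ge_inf; [exists (l + width l u / 2) => y [] | split => //; lra].
lra.
Qed.

Lemma width_cutr l u : proper_window l u -> width (cut_point l u) u <= width l u / 2.
Proof.
move=> lu; have [C_cut l_lt_cut cut_lt cut_ge] := cut_spec lu.
rewrite {1}/width; suff : sup (window (cut_point l u) u) <= l + width l u by lra.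
apply: ge_sup => [|x [Cx /andP[cx xu]]]; first by exists (cut_point l u); split; rewrite ?lexx.
by apply: window_le lu _; split => //; rewrite xu andbT; lra.
Qed.

(* A node of the tree pairs a parameter interval [plo, phi) with a window
   [wlo, whi).  Its two children halve the parameter interval and cut the
   window; following a decision procedure dec from s0 gives a branch. *)
Record node := Node { plo : R; phi : R; wlo : R; whi : R }.

Definition pmid (s : node) : R := (plo s + phi s) / 2.
Definition ncut (s : node) : R := cut_point (wlo s) (whi s).
Definition nwidth (s : node) : R := width (wlo s) (whi s).
Definition in_node (s : node) : set R := window (wlo s) (whi s).
Definition valid (s : node) : Prop := proper_window (wlo s) (whi s) /\ plo s < phi s.

Definition child (left : bool) (s : node) : node :=
  if left then Node (plo s) (pmid s) (wlo s) (ncut s)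
  else Node (pmid s) (phi s) (ncut s) (whi s).

Definition branch (dec : node -> bool) (s0 : node) (n : nat) : node :=
  iter n (fun s => child (dec s) s) s0.

Lemma branchS dec s0 n :
  branch dec s0 n.+1 = child (dec (branch dec s0 n)) (branch dec s0 n).
Proof. by []. Qed.

Lemma child_valid b s : valid s -> valid (child b s).
Proof.
move=> [ws ps]; case: b; rewrite /child /pmid; split => /=.
- exact: proper_cutl.
- lra.
- exact: proper_cutr.
- lra.
Qed.

Lemma branch_valid dec s0 n : valid s0 -> valid (branch dec s0 n).
Proof. by move=> s0_valid; elim: n => // n IHn; rewrite branchS; apply: child_valid. Qed.

Lemma child_nest b s : valid s ->
  [/\ plo s <= plo (child b s), phi (child b s) <= phi s,
      wlo s <= wlo (child b s) & whi (child b s) <= whi s].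
Proof.
move=> [ws ps]; have [_ l_lt_cut cut_lt_u _] := cut_spec ws.
by case: b; rewrite /child /pmid /ncut /=; split; lra.
Qed.

Lemma child_plen b s : phi (child b s) - plo (child b s) = (phi s - plo s) / 2.
Proof. by case: b; rewrite /child /pmid /=; field. Qed.

Lemma child_width b s : valid s -> nwidth (child b s) <= nwidth s / 2.
Proof. by move=> [ws _]; case: b; [apply: width_cutl | apply: width_cutr]. Qed.

Lemma branch_nest dec s0 i j : valid s0 -> (i <= j)%N ->
  let s := branch dec s0 i in let s' := branch dec s0 j in
  [/\ plo s <= plo s', phi s' <= phi s, wlo s <= wlo s' & whi s' <= whi s].
Proof.
move=> s0_valid /subnKC <-; elim: (j - i)%N => [|k [h1 h2 h3 h4]] /=.
  by rewrite addn0 !lexx.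
rewrite addnS branchS.
have [k1 k2 k3 k4] :=
  child_nest (dec (branch dec s0 (i + k))) (branch_valid dec (i + k) s0_valid).
split; lra.
Qed.

Lemma branch_plen_small dec s0 n e : valid s0 -> 0 < e ->
  exists j, phi (branch dec s0 (n + j)) - plo (branch dec s0 (n + j)) < e.
Proof.
move=> s0_valid; apply: halving_lt => [j|j].
- by have [_ ?] := branch_valid dec (n + j) s0_valid; lra.
- by rewrite addnS branchS child_plen.
Qed.

Lemma branch_width_small dec s0 n e : valid s0 -> 0 < e ->
  exists j, nwidth (branch dec s0 (n + j)) < e.
Proof.
move=> s0_valid; apply: halving_lt => [j|j].
- by have [ws _] := branch_valid dec (n + j) s0_valid; apply/ltW/width_gt0.
- by rewrite addnS branchS; apply/child_width/branch_valid.
Qed.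

Lemma branch_wlo_lt_whi dec s0 n m : valid s0 ->
  wlo (branch dec s0 n) < whi (branch dec s0 m).
Proof.
move=> s0_valid; case: (leqP n m) => [nm|/ltnW mn].
- have [_ _ h _] := branch_nest dec s0_valid nm.
  by have [[_ ?] _] := branch_valid dec m s0_valid; lra.
- have [_ _ _ h] := branch_nest dec s0_valid mn.
  by have [[_ ?] _] := branch_valid dec n s0_valid; lra.
Qed.

Lemma branch_plo_lt_phi dec s0 n m : valid s0 ->
  plo (branch dec s0 n) < phi (branch dec s0 m).
Proof.
move=> s0_valid; case: (leqP n m) => [nm|/ltnW mn].
- have [h _ _ _] := branch_nest dec s0_valid nm.
  by have [_ ?] := branch_valid dec m s0_valid; lra.
- have [_ h _ _] := branch_nest dec s0_valid mn.
  by have [_ ?] := branch_valid dec n s0_valid; lra.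
Qed.

Lemma in_node_nest dec s0 i j x : valid s0 -> (i <= j)%N ->
  in_node (branch dec s0 j) x -> in_node (branch dec s0 i) x.
Proof.
move=> s0_valid ij [Cx /andP[h1 h2]]; have [_ _ n3 n4] := branch_nest dec s0_valid ij.
by split => //; apply/andP; split; lra.
Qed.

(* The branch of a parameter t goes left exactly when t lies in the left
   half; the image of t is the point where the windows of its branch shrink. *)
Definition follow (s0 : node) (t : R) : nat -> node :=
  branch (fun s => t < pmid s) s0.
Definition limit (s0 : node) (t : R) : R :=
  sup [set wlo (follow s0 t n) | n in setT].

Section Follow.
Variables (s0 : node) (t : R).
Hypotheses (s0_valid : valid s0) (t_in : plo s0 <= t < phi s0).

Lemma follow_in n : plo (follow s0 t n) <= t < phi (follow s0 t n).
Proof.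
elim: n => // n /andP[lo_t t_hi]; rewrite /follow branchS -/(follow s0 t n).
by rewrite /child; case: ifP => /= t_mid; rewrite /pmid in t_mid *;
  apply/andP; split => //; rewrite leNgt t_mid.
Qed.

(* The branch of t cannot go right forever, since t < phi and the parameter
   intervals shrink. *)
Lemma follow_left_often n : exists k, (n <= k)%N /\ t < pmid (follow s0 t k).
Proof.
apply: contrapT => never_left.
have phi_const j : phi (follow s0 t (n + j)) = phi (follow s0 t n).
  elim: j => [|j IHj]; first by rewrite addn0.
  rewrite addnS /follow branchS -/(follow s0 t (n + j)) /child.
  case: ifP => // t_mid; exfalso; apply: never_left.
  by exists (n + j)%N; rewrite leq_addr t_mid.
have /andP[_ t_hi] := follow_in n.
have e_gt0 : 0 < phi (follow s0 t n) - t by lra.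
have [j len_lt] := branch_plen_small (fun s => t < pmid s) n s0_valid e_gt0.
have /andP[lo_t _] := follow_in (n + j).
by move: len_lt; rewrite -/(follow s0 t (n + j)) phi_const; lra.
Qed.

Lemma limit_has_sup : has_sup [set wlo (follow s0 t n) | n in setT].
Proof.
split; first by exists (wlo (follow s0 t 0)); exists 0%N.
exists (whi (follow s0 t 0)) => _ [n _ <-]; apply/ltW; exact: branch_wlo_lt_whi.
Qed.

Lemma limit_ge n : wlo (follow s0 t n) <= limit s0 t.
Proof. by apply: ub_le_sup limit_has_sup.2 _ _; exists n. Qed.

Lemma limit_le m : limit s0 t <= whi (follow s0 t m).
Proof.
apply: ge_sup; first by exists (wlo (follow s0 t 0)); exists 0%N.
by move=> _ [n _ <-]; apply/ltW; exact: branch_wlo_lt_whi.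
Qed.

(* When the branch goes left at k, its next window ends at the cut point of the
   k-th window, which bounds the limit. *)
Lemma limit_le_cut k : t < pmid (follow s0 t k) -> limit s0 t <= ncut (follow s0 t k).
Proof.
by move=> t_mid; have := limit_le k.+1; rewrite /follow branchS -/(follow s0 t k) t_mid.
Qed.

Lemma limit_mem : C (limit s0 t).
Proof.
apply: C_rclosed => e e_gt0.
have [j width_lt] := branch_width_small (fun s => t < pmid s) 0 s0_valid e_gt0.
have [k [jk t_mid]] := follow_left_often j.
have [wk _] := branch_valid (fun s => t < pmid s) k s0_valid.
have [C_cut lo_cut cut_hi _] := cut_spec wk.
have [_ _ lo_jk hi_jk] := branch_nest (fun s => t < pmid s) s0_valid jk.
have cut_in_j : in_node (follow s0 t j) (ncut (follow s0 t k)).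
  by split => //; apply/andP; split; rewrite /ncut /follow; lra.
have [wj _] := branch_valid (fun s => t < pmid s) j s0_valid.
have := window_le wj cut_in_j; have := limit_ge j; have := limit_le_cut t_mid.
by exists (ncut (follow s0 t k)); split => //; rewrite /nwidth /follow in width_lt *; lra.
Qed.

Lemma limit_in_node m : in_node (follow s0 t m) (limit s0 t).
Proof.
split; first exact: limit_mem.
rewrite limit_ge /=; have [k [mk t_mid]] := follow_left_often m.
have [wk _] := branch_valid (fun s => t < pmid s) k s0_valid.
have [_ _ cut_hi _] := cut_spec wk.
have [_ _ _ hi_mk] := branch_nest (fun s => t < pmid s) s0_valid mk.
by have := limit_le_cut t_mid; rewrite /ncut /follow in cut_hi hi_mk *; lra.
Qed.

Lemma limit_unique x : (forall k, in_node (follow s0 t k) x) -> x = limit s0 t.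
Proof.
move=> x_in.
have close y z k : in_node (follow s0 t k) y -> in_node (follow s0 t k) z ->
    y - z <= nwidth (follow s0 t k).
  move=> yk [_ /andP[lo_z _]]; have [wk _] := branch_valid (fun s => t < pmid s) k s0_valid.
  by have := window_le wk yk; rewrite /nwidth; lra.
apply/eqP; rewrite eq_le; apply/andP; split; rewrite leNgt; apply/negP => lt.
- have e_gt0 : 0 < x - limit s0 t by lra.
  have [k width_lt] := branch_width_small (fun s => t < pmid s) 0 s0_valid e_gt0.
  by have := close _ _ k (x_in k) (limit_in_node k); rewrite /follow in width_lt *; lra.
- have e_gt0 : 0 < limit s0 t - x by lra.
  have [k width_lt] := branch_width_small (fun s => t < pmid s) 0 s0_valid e_gt0.
  by have := close _ _ k (limit_in_node k) (x_in k); rewrite /follow in width_lt *; lra.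
Qed.

End Follow.

(* The branch of a point c of a window: go left exactly when c lies before
   the cut point.  Its parameter intervals shrink to a parameter whose limit
   is c. *)
Definition descend (s0 : node) (c : R) : nat -> node :=
  branch (fun s => c < ncut s) s0.
Definition descend_param (s0 : node) (c : R) : R :=
  sup [set plo (descend s0 c n) | n in setT].

Section Descend.
Variables (s0 : node) (c : R).
Hypotheses (s0_valid : valid s0) (c_in : in_node s0 c).

Lemma descend_in n : in_node (descend s0 c n) c.
Proof.
elim: n => // n [Cc /andP[lo_c c_hi]]; rewrite /descend branchS -/(descend s0 c n).
rewrite /child; case: ifP => /= c_cut; split => //.
  by rewrite lo_c c_cut.
by rewrite c_hi andbT leNgt c_cut.
Qed.

(* The branch of c cannot go right forever: C has points just after c, and
   they would stay in windows whose width tends to 0. *)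
Lemma descend_left_often n : exists k, (n <= k)%N /\ c < ncut (descend s0 c k).
Proof.
apply: contrapT => never_left.
have whi_const j : whi (descend s0 c (n + j)) = whi (descend s0 c n).
  elim: j => [|j IHj]; first by rewrite addn0.
  rewrite addnS /descend branchS -/(descend s0 c (n + j)) /child.
  case: ifP => // c_cut; exfalso; apply: never_left.
  by exists (n + j)%N; rewrite leq_addr c_cut.
have [Cc /andP[_ c_hi]] := descend_in n.
have e_gt0 : 0 < whi (descend s0 c n) - c by lra.
have [c' [Cc' /andP[c_c' c'_lt]]] := C_rperfect Cc e_gt0.
have e'_gt0 : 0 < c' - c by lra.
have [j width_lt] := branch_width_small (fun s => c < ncut s) n s0_valid e'_gt0.
have [_ /andP[lo_c _]] := descend_in (n + j).
have [wnj _] := branch_valid (fun s => c < ncut s) (n + j) s0_valid.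
have c'_in : in_node (descend s0 c (n + j)) c'.
  by split => //; apply/andP; split; [lra | rewrite whi_const; lra].
by have := window_le wnj c'_in; rewrite /nwidth /descend in width_lt lo_c *; lra.
Qed.

Lemma descend_param_in k :
  plo (descend s0 c k) <= descend_param s0 c < phi (descend s0 c k).
Proof.
have param_ub : ubound [set plo (descend s0 c n) | n in setT] (phi (descend s0 c 0)).
  by move=> _ [n _ <-]; apply/ltW; exact: branch_plo_lt_phi.
apply/andP; split; first by apply: ub_le_sup; [exists (phi (descend s0 c 0)) | exists k].
have [j [kj c_cut]] := descend_left_often k.
have sup_le : descend_param s0 c <= phi (descend s0 c j.+1).
  apply: ge_sup => [|_ [n _ <-]]; first by exists (plo (descend s0 c 0)); exists 0%N.
  by apply/ltW; exact: branch_plo_lt_phi.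
move: sup_le; rewrite /descend branchS -/(descend s0 c j) c_cut /=.
have [_ lo_hi] := branch_valid (fun s => c < ncut s) j s0_valid.
have [_ hi_kj _ _] := branch_nest (fun s => c < ncut s) s0_valid kj.
by rewrite /pmid /descend in lo_hi hi_kj *; lra.
Qed.

(* The parameter of c follows the branch of c, hence is mapped to c. *)
Lemma follow_descend k : follow s0 (descend_param s0 c) k = descend s0 c k.
Proof.
elim: k => // k IHk.
rewrite /follow branchS -/(follow s0 (descend_param s0 c) k) IHk /descend branchS.
have := descend_param_in k.+1; rewrite /descend branchS -/(descend s0 c k).
case: (c < ncut (descend s0 c k)); rewrite /child /= => /andP[lo hi].
- by rewrite hi.
- have -> // : (descend_param s0 c < pmid (descend s0 c k)) = false.
  by apply/negbTE; rewrite -leNgt.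
Qed.

Lemma limit_descend : limit s0 (descend_param s0 c) = c.
Proof.
apply/esym/limit_unique => // [|k]; first by have := descend_param_in 0; rewrite /descend.
by rewrite follow_descend; exact: descend_in.
Qed.

End Descend.

Section Limit.
Variable s0 : node.
Hypothesis s0_valid : valid s0.

Lemma follow_agree t t' n : plo (follow s0 t n) <= t' < phi (follow s0 t n) ->
  forall k, (k <= n)%N -> follow s0 t' k = follow s0 t k.
Proof.
move=> /andP[lo_t' t'_hi]; elim=> // k IHk kn.
rewrite /follow !branchS -/(follow s0 t' k) -/(follow s0 t k) (IHk (ltnW kn)).
have [lo_kn hi_kn _ _] := branch_nest (fun s => t < pmid s) s0_valid kn.
rewrite /follow branchS -/(follow s0 t k) in lo_kn hi_kn.
case t_mid: (t < pmid (follow s0 t k)); rewrite t_mid /child /= in lo_kn hi_kn.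
- by have -> : t' < pmid (follow s0 t k) by rewrite /follow /pmid in hi_kn t'_hi *; lra.
- have -> // : (t' < pmid (follow s0 t k)) = false.
  by apply/negbTE; rewrite -leNgt; rewrite /follow /pmid in lo_kn lo_t' *; lra.
Qed.

Lemma follow_mono t t' n : t <= t' ->
  follow s0 t n = follow s0 t' n \/ whi (follow s0 t n) <= wlo (follow s0 t' n).
Proof.
move=> tt'; elim: n => [|n [same|apart]]; first by left.
- rewrite /follow !branchS -/(follow s0 t n) -/(follow s0 t' n) -same /child.
  case t_mid: (t < _); case t'_mid: (t' < _).
  + by left.
  + by right; rewrite /= lexx.
  + by move/negbT: t_mid; rewrite -leNgt; move: t'_mid; lra.
  + by left.
- right; rewrite /follow !branchS -/(follow s0 t n) -/(follow s0 t' n).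
  have [_ _ _ hi] := child_nest (t < pmid (follow s0 t n))
    (branch_valid (fun s => t < pmid s) n s0_valid).
  have [_ _ lo _] := child_nest (t' < pmid (follow s0 t' n))
    (branch_valid (fun s => t' < pmid s) n s0_valid).
  by rewrite /follow in apart; lra.
Qed.

Lemma limit_mono t t' : t <= t' -> limit s0 t <= limit s0 t'.
Proof.
move=> tt'.
apply: ge_sup; first by exists (wlo (follow s0 t 0)); exists 0%N.
move=> _ [n _ <-]; case: (follow_mono n tt') => [->|apart].
  exact: limit_ge.
have := limit_ge t' s0_valid n; have := branch_wlo_lt_whi (fun s => t < pmid s) n n s0_valid.
by rewrite /follow in apart *; lra.
Qed.

Lemma follow_shift t n k : follow s0 t (k + n) = follow (follow s0 t n) t k.
Proof. by rewrite /follow /branch iterD. Qed.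

Lemma limit_subtree t n t' :
  plo s0 <= t < phi s0 -> plo (follow s0 t n) <= t' < phi (follow s0 t n) ->
  limit s0 t' = limit (follow s0 t n) t'.
Proof.
move=> t_in t'_in; have same_n := follow_agree t'_in (leqnn n).
set s := follow s0 t n in t'_in same_n *.
have s_valid : valid s := branch_valid _ n s0_valid.
have /andP[lo_t' t'_hi] := t'_in.
have [lo0 hi0 _ _] := branch_nest (fun s => t < pmid s) s0_valid (leq0n n).
apply/esym/limit_unique => // [|j].
  by apply/andP; rewrite /= /s /follow in lo0 hi0 lo_t' t'_hi *; split; lra.
have [jn|/ltnW nj] := leqP j n.
- apply: (in_node_nest s0_valid jn); rewrite -/(follow s0 t' n) same_n.
  by have := limit_in_node s_valid t'_in 0.
- by rewrite -(subnK nj) follow_shift same_n; apply: limit_in_node.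
Qed.

Lemma limit_right_cont t e : plo s0 <= t < phi s0 -> 0 < e ->
  exists2 d, 0 < d & forall t', t <= t' < t + d ->
    plo s0 <= t' < phi s0 /\ limit s0 t <= limit s0 t' < limit s0 t + e.
Proof.
move=> t_in e_gt0.
have [n width_lt] := branch_width_small (fun s => t < pmid s) 0 s0_valid e_gt0.
have /andP[lo_t t_hi] := follow_in t_in n.
exists (phi (follow s0 t n) - t) => [|t' /andP[t_t' t'_lt]]; first by lra.
have [lo0 hi0 _ _] := branch_nest (fun s => t < pmid s) s0_valid (leq0n n).
have t'_in : plo (follow s0 t n) <= t' < phi (follow s0 t n).
  by apply/andP; split; rewrite /follow in lo_t t'_lt *; lra.
have t'_in0 : plo s0 <= t' < phi s0.
  by apply/andP; split; move: t_in => /andP[? ?]; rewrite /follow in lo0 hi0 t'_lt *; lra.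
split; rewrite // limit_mono //=.
have := limit_in_node s0_valid t'_in0 n; rewrite (follow_agree t'_in (leqnn n)) => lim_in.
have [wn _] := branch_valid (fun s => t < pmid s) n s0_valid.
have := window_le wn lim_in; have := limit_ge t s0_valid n.
by rewrite /nwidth /follow in width_lt *; lra.
Qed.

Lemma limit_right_open t d : plo s0 <= t < phi s0 -> 0 < d ->
  exists2 eta, 0 < eta & forall c, C c -> limit s0 t <= c < limit s0 t + eta ->
    exists t', [/\ t <= t' < t + d, plo s0 <= t' < phi s0 & limit s0 t' = c].
Proof.
move=> t_in d_gt0.
have [n plen_lt] := branch_plen_small (fun s => t < pmid s) 0 s0_valid d_gt0.
set s := follow s0 t n; have s_valid : valid s := branch_valid _ n s0_valid.
have [_ /andP[lo_lim lim_hi]] := limit_in_node s0_valid t_in n.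
exists (whi s - limit s0 t) => [|c Cc /andP[lim_c c_lt]]; first by rewrite /s; lra.
have c_in : in_node s c by split => //; apply/andP; split; rewrite /s; lra.
have /andP[lo_t'' t''_hi] := descend_param_in s_valid c_in 0.
have t''_in : plo s <= (descend_param s c) < phi s by apply/andP; split.
have lim_t'' : limit s0 (descend_param s c) = c.
  by rewrite (limit_subtree t_in t''_in) limit_descend.
have [lo0 hi0 _ _] := branch_nest (fun s => t < pmid s) s0_valid (leq0n n).
have /andP[lo_t t_hi] := follow_in t_in n.
have t''_in0 : plo s0 <= (descend_param s c) < phi s0.
  by apply/andP; split; rewrite /s /descend /follow in lo0 hi0 lo_t'' t''_hi *; lra.
have [t_t''|t''_t] := leP t (descend_param s c).
- exists (descend_param s c); split => //; apply/andP; split => //.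
  by rewrite /s /descend /follow in t''_hi plen_lt lo_t *; lra.
- exists t; split => //; first by rewrite lexx /=; lra.
  by apply/eqP; rewrite eq_le lim_c /= -{1}lim_t''; apply/limit_mono/ltW.
Qed.

End Limit.

(* Gluing: the unit interval [k, k + 1) of the line is sent by the limit map
   of a root node onto the points of C in [k, k + 1), or, when there are
   none, onto those in [c0, c0 + 1) for a fixed c0 in C. *)
Section UnitPieces.
Variable c0 : R.
Hypothesis C_c0 : C c0.

Definition meets_unit (k : int) : Prop := exists c, C c /\ k%:~R <= c < k%:~R + 1.

Definition unit_root (k : int) : node :=
  if pselect (meets_unit k) then Node 0 1 (inf [set c | C c /\ k%:~R <= c]) (k%:~R + 1)
  else Node 0 1 c0 (c0 + 1).

Definition glued_map (x : R) : R :=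
  limit (unit_root (Num.floor x)) (x - (Num.floor x)%:~R).

Lemma root_param k : plo (unit_root k) = 0 /\ phi (unit_root k) = 1.
Proof. by rewrite /unit_root; case: pselect. Qed.

Lemma first_point_spec k : meets_unit k ->
  let l := inf [set c | C c /\ k%:~R <= c] in
  [/\ C l, k%:~R <= l & forall c, C c -> k%:~R <= c -> l <= c].
Proof.
move=> [c [Cc /andP[kc _]]] l.
have A_lb : has_lbound [set c | C c /\ k%:~R <= c] by exists k%:~R => x [].
have c_le : forall c, C c -> k%:~R <= c -> l <= c by move=> c' Cc' kc'; apply: ge_inf.
split => //; first by apply: right_closed_inf => //; [move=> x [] | exists c].
by apply: lb_le_inf => [|x []]; first exists c.
Qed.

Lemma root_valid k : valid (unit_root k).
Proof.
rewrite /valid /proper_window /unit_root.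
case: (pselect (meets_unit k)) => [meets|no] /=.
  have [C_l _ l_le] := first_point_spec meets.
  have [c [Cc /andP[kc c_lt]]] := meets; have := l_le c Cc kc.
  by split; [split => //|]; lra.
by split; [split => //|]; lra.
Qed.

Lemma root_window k c : C c -> k%:~R <= c < k%:~R + 1 -> in_node (unit_root k) c.
Proof.
move=> Cc /andP[kc c_lt]; rewrite /unit_root.
case: (pselect (meets_unit k)) => [meets|no]; last first.
  by exfalso; apply: no; exists c; rewrite kc c_lt.
have [_ _ l_le] := first_point_spec meets.
by split => //=; rewrite l_le // c_lt.
Qed.

Lemma glued_map_unit (k : int) (t : R) : 0 <= t < 1 ->
  glued_map (k%:~R + t) = limit (unit_root k) t.
Proof.
move=> /andP[t_ge t_lt]; rewrite /glued_map.
have -> : Num.floor (k%:~R + t) = k by apply: floor_unit; apply/andP; split; lra.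
by rewrite (addrC k%:~R) addrK.
Qed.

Lemma glued_map_mem x : C (glued_map x).
Proof.
have [lo hi] := root_param (Num.floor x).
by apply: limit_mem (root_valid _) _; rewrite lo hi frac_in.
Qed.

Lemma glued_map_onto c : C c -> exists x, glued_map x = c.
Proof.
move=> Cc; have := frac_in c; set k := Num.floor c => /andP[f_ge f_lt].
have c_in : in_node (unit_root k) c by apply: root_window => //; apply/andP; split; lra.
have [lo hi] := root_param k.
have := descend_param_in (root_valid k) c_in 0; rewrite /= lo hi => t_in.
exists (k%:~R + descend_param (unit_root k) c).
by rewrite glued_map_unit // (limit_descend (root_valid k) c_in).
Qed.

Lemma glued_map_right_cont : sorgenfrey_continuous glued_map.
Proof.
move=> x e e_gt0; have := frac_in x; set k := Num.floor x => x_in.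
have [lo hi] := root_param k.
have x_in' : plo (unit_root k) <= x - k%:~R < phi (unit_root k) by rewrite lo hi.
have [d d_gt0 close] := limit_right_cont (root_valid k) x_in' e_gt0.
exists d => // y /andP[xy y_lt].
have [y_in lim_y] := close (y - k%:~R) (ltac:(apply/andP; split; lra)).
rewrite lo hi in y_in.
have -> : glued_map y = limit (unit_root k) (y - k%:~R).
  by rewrite -glued_map_unit // addrC subrK.
exact: lim_y.
Qed.

Lemma glued_map_right_open : sorgenfrey_open_onto C glued_map.
Proof.
move=> x d d_gt0; have := frac_in x; set k := Num.floor x => x_in.
have [lo hi] := root_param k.
have x_in' : plo (unit_root k) <= x - k%:~R < phi (unit_root k) by rewrite lo hi.
have [eta eta_gt0 close] := limit_right_open (root_valid k) x_in' d_gt0.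
exists eta => // c Cc c_near.
have [t' [/andP[t_t' t'_lt] t'_in lim_t']] := close c Cc c_near.
rewrite lo hi in t'_in.
exists (k%:~R + t'); split; first by apply/andP; split; lra.
by rewrite glued_map_unit.
Qed.

End UnitPieces.

Lemma right_open_map_onto : C !=set0 ->
  exists g : R -> R, [/\ forall x, C (g x), forall c, C c -> exists x, g x = c,
                        sorgenfrey_continuous g & sorgenfrey_open_onto C g].
Proof.
move=> [c0 C_c0]; exists (glued_map c0); split.
- exact: glued_map_mem.
- exact: glued_map_onto.
- exact: glued_map_right_cont.
- exact: glued_map_right_open.
Qed.

End SplittingTree.

Section SorgenfreyMaps.
Variable R : realType.

Lemma hoitv_open (a b : R) : open (hoitv a b : set (sorgenfrey R)).
Proof. by change (sorgenfrey_open (hoitv a b)) => x hx; exists a, b; split. Qed.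

Lemma sorgenfrey_continuousP (g : sorgenfrey R -> sorgenfrey R) :
  sorgenfrey_continuous g -> continuous g.
Proof.
move=> g_cont; apply/continuousP => A.
change (sorgenfrey_open A -> sorgenfrey_open (g @^-1` A)).
move=> A_open x /= /A_open[a [c [/andP[a_gx gx_c] ac_A]]].
have e_gt0 : 0 < c - g x by rewrite subr_gt0.
have [d d_gt0 g_near] := g_cont x _ e_gt0.
exists x, (x + d); split; first by rewrite /hoitv /= lexx ltrDl.
move=> y /g_near /andP[gx_gy gy_lt]; apply: ac_A; apply/andP; split.
  exact: le_trans gx_gy.
by move: gy_lt; rewrite addrC subrK.
Qed.

Lemma sorgenfrey_open_trace (C : set R) (g : sorgenfrey R -> sorgenfrey R) :
  (forall x, C (g x)) -> sorgenfrey_open_onto C g ->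
  forall U : set (sorgenfrey R), open U ->
  exists2 O : set (sorgenfrey R), open O & g @` U = O `&` C.
Proof.
move=> g_in g_open U.
change (sorgenfrey_open U -> exists2 O, sorgenfrey_open O & g @` U = O `&` C).
move=> U_open; exists [set w | exists2 x, U x & exists2 eta, g x <= w < g x + eta &
          forall c, C c -> g x <= c < g x + eta -> (g @` U) c].
  move=> w [x Ux [eta /andP[gx_w w_lt] eta_U]]; exists w, (g x + eta).
  split; first by rewrite /hoitv /= lexx w_lt.
  move=> v /andP[w_v v_lt]; exists x => //; exists eta => //.
  by rewrite v_lt (le_trans gx_w w_v).
apply/seteqP; split => [_ [x Ux <-]|w [[x Ux [eta w_near eta_U]] Cw]].
- split => //; exists x => //.
  have [a [c [/andP[a_x x_c] ac_U]]] := U_open x Ux.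
  have [eta eta_gt0 g_onto] := g_open x (c - x) (ltac:(by rewrite subr_gt0)).
  exists eta; first by rewrite lexx ltrDl.
  move=> c' Cc' /(g_onto c' Cc') [y [/andP[x_y y_lt] <-]]; exists y => //.
  apply: ac_U; apply/andP; split; first exact: le_trans x_y.
  by move: y_lt; rewrite addrC subrK.
- exact: eta_U w Cw w_near.
Qed.

End SorgenfreyMaps.

Section Preimage.
Variables (R : realType) (X : topologicalType) (f : sorgenfrey R -> X) (F : set X).

Lemma preimage_right_closed : continuous f -> closed F -> right_closed [set x : R | F (f x)].
Proof.
move=> f_cont F_closed y y_adh; apply: contrapT => nFy.
have : sorgenfrey_open (f @^-1` (~` F)) := (continuousP f).1 f_cont _ (closed_openC F_closed).
move=> /(_ y nFy)[a [c [/andP[a_y y_c] ac_nF]]].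
have [c' [Fc' /andP[y_c' c'_lt]]] := y_adh (c - y) (ltac:(by rewrite subr_gt0)).
by apply: (ac_nF c') => //; apply/andP; split; lra.
Qed.

Lemma preimage_right_perfect : (forall U, open U -> open (f @` U)) ->
  (forall x : set_type F, ~ open [set x]) -> right_perfect [set x : R | F (f x)].
Proof.
move=> f_open F_perfect c Fc e e_gt0; apply: contrapT => isolated.
apply: (F_perfect (exist _ (f c) (mem_set Fc))).
exists (f @` hoitv c (c + e)); first exact/f_open/hoitv_open.
apply/seteqP; split => [q [u /andP[c_u u_lt] fu_q]|q /= ->].
- have Fu : F (f u) by rewrite fu_q; exact: set_valP.
  have [c_lt_u|u_lt_c|c_eq_u] := ltgtP c u.
  + by exfalso; apply: isolated; exists u; rewrite c_lt_u u_lt.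
  + by move: c_u; rewrite leNgt u_lt_c.
  + by apply: val_inj; rewrite /= c_eq_u fu_q.
- by exists c => //; rewrite /hoitv /= lexx ltrDl.
Qed.

End Preimage.

Lemma image_setI_preimage (T U : Type) (f : T -> U) (A : set T) (B : set U) :
  f @` (A `&` f @^-1` B) = f @` A `&` B.
Proof.
apply/seteqP; split => [_ [x [Ax Bfx] <-]|_ [[x Ax <-] Bfx]]; first by split => //; exists x.
by exists x.
Qed.

Section Corestriction.
Variables (R : realType) (X : topologicalType) (F : set X) (h : sorgenfrey R -> X).
Hypothesis h_in : forall x, F (h x).

Definition corestrict (x : sorgenfrey R) : set_type F := exist _ (h x) (mem_set (h_in x)).

Lemma corestrict_image : continuous h -> (forall y, F y -> exists x, h x = y) ->
  (forall U, open U -> exists2 V : set X, open V & h @` U = V `&` F) ->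
  continuous_open_image_sorgenfrey R (set_type F).
Proof.
move=> h_cont h_onto h_open; exists corestrict; split.
- by apply: (continuous_comp_initial (w := set_val)).
- move=> U /h_open[V V_open hU]; exists V => //. apply/seteqP; split => q /=.
  + move=> Vq; have [x Ux hx_q] : (h @` U) (set_val q) by rewrite hU; split => //; exact: set_valP.
    by exists x => //; apply: val_inj; rewrite /= hx_q.
  + by case=> x Ux <-; have [] : (V `&` F) (h x) by rewrite -hU; exists x.
- move=> q; have [x hx_q] := h_onto _ (set_valP q).
  by exists x; apply: val_inj; rewrite /= hx_q.
Qed.

End Corestriction.

Unset Implicit Arguments.

Theorem mainTheorem16 (R : realType) (X : topologicalType) (F : set X) :
  continuous_open_image_sorgenfrey R X ->
  F !=set0 ->
  closed F ->
  (forall x : set_type F, ~ open [set x]) ->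
  continuous_open_image_sorgenfrey R (set_type F).
Proof.
move=> [f [f_cont f_open f_onto]] [z Fz] F_closed F_perfect.
pose C := [set x : R | F (f x)].
have C_ne : C !=set0 by have [x fx_z] := f_onto z; exists x; rewrite /C /= fx_z.
have [g [g_in g_onto g_cont g_open]] := right_open_map_onto
  (preimage_right_closed f_cont F_closed) (preimage_right_perfect f_open F_perfect) C_ne.
apply: (corestrict_image (h := f \o g) g_in).
- move=> x; apply: continuous_comp; [exact: sorgenfrey_continuousP | exact: f_cont].
- move=> y Fy; have [x1 fx1_y] := f_onto y.
  have [x gx_x1] : exists x, g x = x1 by apply: g_onto; rewrite /C /= fx1_y.
  by exists x; rewrite /= gx_x1.
- move=> U /(sorgenfrey_open_trace g_in g_open)[W W_open gU].
  exists (f @` W); first exact: f_open.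
  by rewrite -image_comp gU image_setI_preimage.
Qed.
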